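(* Let $a,b,k\in\mathbb{N}$ with $k\le\min(a,b)$. Then $\mathcal{D}_k([a]\times[b])\cong\mathcal{C}(a,k)\times\mathcal{C}(b,k)$ as posets.
   Context: $[n]=\{1,\dots,n\}$ and $\mathbb{Z}_+^2$ carries the product order. A Ferrers diagram is a finite order ideal of $\mathbb{Z}_+^2$. The Durfee length of a Ferrers diagram $D$ is the largest $k\in\mathbb{N}$ with $[k]\times[k]\subseteq D$. $\mathcal{D}_k([a]\times[b])$ is the set of Ferrers diagrams of Durfee length exactly $k$ contained in $[a]\times[b]$, ordered by inclusion. For $k\le n$, $\mathcal{C}(n,k)$ is the set of $k$-element subsets of $[n]$, each written as an increasing sequence $(x_1<\dots<x_k)$, with $\mathbf{x}\le\mathbf{y}$ iff $x_i\le y_i$ for all $i$; products of posets carry the product order. *)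

From mathcomp Require Import all_boot.
Set Implicit Arguments. Unset Strict Implicit. Unset Printing Implicit Defensive.

(* Cells of [a] x [b] are encoded as pairs (x, y) : 'I_a * 'I_b, where the
   ordinal x (value 0..a-1) stands for the element x+1 of [a]. *)

Definition ferrers (a b : nat) (D : {set 'I_a * 'I_b}) : Prop :=
  forall (x x' : 'I_a) (y y' : 'I_b),
    (x, y) \in D -> (x' <= x)%N -> (y' <= y)%N -> (x', y') \in D.

Definition square_in (a b : nat) (D : {set 'I_a * 'I_b}) (m : nat) : Prop :=
  forall i j : nat, (i < m)%N -> (j < m)%N ->
    exists (x : 'I_a) (y : 'I_b), nat_of_ord x = i /\ nat_of_ord y = j /\ (x, y) \in D.

Definition durfee_length_is (a b : nat) (D : {set 'I_a * 'I_b}) (k : nat) : Prop :=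
  square_in D k /\ forall m, square_in D m -> (m <= k)%N.

Definition Dk (a b k : nat) : Type :=
  {D : {set 'I_a * 'I_b} | ferrers D /\ durfee_length_is D k}.

Definition Dk_le (a b k : nat) (D E : Dk a b k) : Prop := proj1_sig D \subset proj1_sig E.

(* C(n,k): k-element subsets of [n], written as increasing sequences
   x_1 < ... < x_k of elements of [n] = {1..n}. *)
Definition Ck (n k : nat) : Type :=
  {x : k.-tuple nat | sorted ltn x /\ all (fun v => (1 <= v <= n)%N) x}.

Definition Ck_le (n k : nat) (x y : Ck n k) : Prop :=
  forall i : 'I_k, (tnth (proj1_sig x) i <= tnth (proj1_sig y) i)%N.

Definition CC_le (a b k : nat) (p q : Ck a k * Ck b k) : Prop :=
  Ck_le p.1 q.1 /\ Ck_le p.2 q.2.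

Definition poset_iso (S T : Type) (leS : S -> S -> Prop) (leT : T -> T -> Prop) : Prop :=
  exists f : S -> T, bijective f /\ forall s1 s2, leS s1 s2 <-> leT (f s1) (f s2).

From mathcomp Require Import all_boot zify.
From Stdlib Require Import ProofIrrelevance.

Set Implicit Arguments. Unset Strict Implicit. Unset Printing Implicit Defensive.

(* A diagram of Durfee length k is the union of its first k rows and its first k columns,
   so it is determined by the lengths r_0 >= ... >= r_(k-1) >= k of those rows and the
   lengths of those columns. Since x |-> r_x - x is strictly decreasing with values in
   [1, b], reading it from x = k-1 down to 0 gives an element of C(b, k); the columns give
   an element of C(a, k) in the same way, and any such pair is realised. Inclusion of
   diagrams amounts to comparing row and column lengths, i.e. the codes entrywise. *)

Lemma sorted_ltn_nth_addn (s : seq nat) i d : sorted ltn s -> i + d < size s ->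
  nth 0 s i + d <= nth 0 s (i + d).
Proof.
move=> /sortedP lt_s; elim: d => [|d IHd]; first by rewrite !addn0.
rewrite addnS => lt_id; have := lt_s 0 _ lt_id.
by have := IHd (ltnW lt_id); rewrite addnS /=; lia.
Qed.

Lemma sorted_ltn_nth_gt (s : seq nat) i : sorted ltn s -> all (leq 1) s ->
  i < size s -> i < nth 0 s i.
Proof.
case: s => [|x s] //= s_sorted /andP[x_gt0 _] lt_i.
have := @sorted_ltn_nth_addn (x :: s) 0 i s_sorted lt_i; rewrite /= add0n; lia.
Qed.

Lemma sorted_ltn_nth_room (s : seq nat) n i : sorted ltn s -> all (leq^~ n) s ->
  i < size s -> nth 0 s i + ((size s).-1 - i) <= n.
Proof.
move=> s_sorted s_le_n lt_i.
have lt_last : (size s).-1 < size s by lia.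
have := @sorted_ltn_nth_addn s i ((size s).-1 - i) s_sorted; rewrite subnKC; last by lia.
have /= := allP s_le_n _ (mem_nth 0 lt_last); lia.
Qed.

Lemma card_ord_ltn b n : n <= b -> #|[set y : 'I_b | y < n]| = n.
Proof.
move=> le_nb; have widen_inj : injective (widen_ord le_nb).
  by move=> i j /(congr1 val) /= /val_inj.
suff -> : [set y : 'I_b | y < n] = widen_ord le_nb @: setT.
  by rewrite card_imset // cardsT card_ord.
apply/setP => y; rewrite inE; apply/idP/imsetP => [lt_yn | [z _ ->]].
  by exists (Ordinal lt_yn) => //; apply: val_inj.
exact: (ltn_ord z).
Qed.

Section Rows.

Variables a b : nat.
Implicit Types D E : {set 'I_a * 'I_b}.

Definition row D (x : nat) : {set 'I_b} :=
  [set y | [exists x' : 'I_a, (x' == x :> nat) && ((x', y) \in D)]].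

Definition row_len D x := #|row D x|.

Definition tr_diagram D : {set 'I_b * 'I_a} := [set p | (p.2, p.1) \in D].

Lemma in_row D (x : 'I_a) y : (y \in row D x) = ((x, y) \in D).
Proof.
rewrite inE; apply/existsP/idP => [[x' /andP[/eqP/val_inj-> //]] | xy_D].
by exists x; rewrite eqxx.
Qed.

Lemma row_len_max D x : row_len D x <= b.
Proof. by rewrite -[b]card_ord max_card. Qed.

Lemma subset_row_len D E x : D \subset E -> row_len D x <= row_len E x.
Proof.
move=> /subsetP sDE; apply/subset_leq_card/subsetP => y.
rewrite !inE => /existsP[x' /andP[eq_x' /sDE xy_E]].
by apply/existsP; exists x'; rewrite eq_x'.
Qed.

Lemma mem_ferrers_row_len D (x : 'I_a) (y : 'I_b) :
  ferrers D -> ((x, y) \in D) = (y < row_len D x).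
Proof.
move=> D_ferrers; apply/idP/idP => [xy_D | lt_y_len].
- rewrite /row_len -(card_ord_ltn (ltn_ord y)); apply/subset_leq_card/subsetP => z.
  by rewrite inE ltnS in_row => le_zy; apply: D_ferrers xy_D _ le_zy.
- apply: contraLR lt_y_len => xy_notD; rewrite -leqNgt /row_len.
  rewrite -[X in _ <= X](card_ord_ltn (ltnW (ltn_ord y))).
  apply/subset_leq_card/subsetP => z; rewrite in_row inE ltnNge.
  by move=> xz_D; apply: contraNN xy_notD => le_yz; apply: D_ferrers xz_D _ le_yz.
Qed.

Lemma row_len_noninc D x x' : ferrers D -> x <= x' -> row_len D x' <= row_len D x.
Proof.
move=> D_ferrers le_xx'; apply/subset_leq_card/subsetP => y.
rewrite !inE => /existsP[z /andP[/eqP val_z zy_D]].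
have lt_xa : x < a by rewrite (leq_ltn_trans le_xx') // -val_z.
apply/existsP; exists (Ordinal lt_xa); rewrite eqxx.
by apply: D_ferrers zy_D _ (leqnn _); rewrite val_z.
Qed.

Lemma square_row_len D k x : ferrers D -> square_in D k -> x < k -> k <= row_len D x.
Proof.
move=> D_ferrers D_square lt_xk.
have lt_pred : k.-1 < k by lia.
have [x' [y [<- [val_y xy_D]]]] := D_square x k.-1 lt_xk lt_pred.
by move: xy_D; rewrite mem_ferrers_row_len // val_y; lia.
Qed.

Lemma durfee_cell D k (x : 'I_a) (y : 'I_b) :
  ferrers D -> (forall m, square_in D m -> m <= k) -> (x, y) \in D -> (x < k) || (y < k).
Proof.
move=> D_ferrers D_max xy_D; rewrite !ltnNge -negb_and; apply/negP => /andP[le_kx le_ky].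
suff /D_max : square_in D k.+1 by rewrite ltnn.
move=> i j lt_ik lt_jk.
have lt_ia : i < a by apply: leq_ltn_trans (ltn_ord x); lia.
have lt_jb : j < b by apply: leq_ltn_trans (ltn_ord y); lia.
exists (Ordinal lt_ia), (Ordinal lt_jb); do 2!split=> //.
by apply: D_ferrers xy_D _ _ => /=; lia.
Qed.

End Rows.

Section Transpose.

Variables a b : nat.
Implicit Types D E : {set 'I_a * 'I_b}.

Lemma subset_tr_diagram D E : D \subset E -> tr_diagram D \subset tr_diagram E.
Proof. by move=> /subsetP sDE; apply/subsetP => -[y x]; rewrite !inE => /sDE. Qed.

Lemma ferrers_tr_diagram D : ferrers D -> ferrers (tr_diagram D).
Proof.
by move=> D_ferrers y y' x x'; rewrite !inE => yx_D le_y le_x; apply: D_ferrers yx_D _ _.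
Qed.

Lemma square_in_tr_diagram D m : square_in D m -> square_in (tr_diagram D) m.
Proof.
move=> D_square i j lt_im lt_jm; have [x [y [val_x [val_y xy_D]]]] := D_square j i lt_jm lt_im.
by exists y, x; rewrite inE.
Qed.

Lemma subset_ferrers_row_len D E k :
  ferrers D -> (forall m, square_in D m -> m <= k) -> ferrers E ->
  D \subset E <-> (forall x, x < k -> row_len D x <= row_len E x) /\
                  (forall y, y < k -> row_len (tr_diagram D) y <= row_len (tr_diagram E) y).
Proof.
move=> D_ferrers D_max E_ferrers; split=> [sDE | [le_rows le_cols]].
  by split=> x _; apply: subset_row_len => //; apply: subset_tr_diagram.
apply/subsetP => -[x y] xy_D; case/orP: (durfee_cell D_ferrers D_max xy_D) => [lt_xk | lt_yk].
  by move: xy_D; rewrite !mem_ferrers_row_len // => /leq_trans; apply; apply: le_rows.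
suff : (y, x) \in tr_diagram E by rewrite inE.
have : (y, x) \in tr_diagram D by rewrite inE.
have [trD_ferrers trE_ferrers] := (ferrers_tr_diagram D_ferrers, ferrers_tr_diagram E_ferrers).
rewrite !mem_ferrers_row_len //.
by move=> /leq_trans; apply; apply: le_cols.
Qed.

End Transpose.

Section DurfeeCode.

Variables a b : nat.
Implicit Types D E : {set 'I_a * 'I_b}.

(* Entry i records row k-1-i, so that the code is increasing. *)
Definition durfee_code D k : k.-tuple nat :=
  @Tuple k nat (mkseq (fun i => row_len D (k.-1 - i) - (k.-1 - i)) k)
    (introT eqP (size_mkseq _ k)).

Lemma tnth_durfee_code D k (i : 'I_k) :
  tnth (durfee_code D k) i = row_len D (k.-1 - i) - (k.-1 - i).
Proof. by rewrite (tnth_nth 0) nth_mkseq. Qed.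

Lemma durfee_code_sorted D k : ferrers D -> square_in D k -> sorted ltn (durfee_code D k).
Proof.
move=> D_ferrers D_square; apply: (homo_sorted_in (e := ltn) (P := [pred i | i < k])).
- move=> i j; rewrite !inE /ltn /= => lt_ik lt_jk lt_ij.
  have [le_rows lt_row] : k.-1 - j <= k.-1 - i /\ k.-1 - i < k by lia.
  have := row_len_noninc D_ferrers le_rows.
  have := square_row_len D_ferrers D_square lt_row.
  lia.
- by apply/allP => i; rewrite mem_iota.
- exact: iota_ltn_sorted.
Qed.

Lemma durfee_code_bounded D k : ferrers D -> square_in D k ->
  all (fun v => 1 <= v <= b) (durfee_code D k).
Proof.
move=> D_ferrers D_square; apply/allP => v /mapP[i].
rewrite mem_iota add0n => /andP[_ lt_ik] ->.
have lt_row : k.-1 - i < k by lia.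
have := square_row_len D_ferrers D_square lt_row; have := row_len_max D (k.-1 - i); lia.
Qed.

Lemma leq_durfee_code D E k :
  ferrers D -> square_in D k -> ferrers E -> square_in E k ->
  (forall i : 'I_k, tnth (durfee_code D k) i <= tnth (durfee_code E k) i) <->
  (forall x, x < k -> row_len D x <= row_len E x).
Proof.
move=> D_ferrers D_square E_ferrers E_square; split=> [le_code x lt_xk | le_rows i].
  have lt_row : k.-1 - x < k by lia.
  have := le_code (Ordinal lt_row); rewrite !tnth_durfee_code /= subKn; last by lia.
  by have := square_row_len D_ferrers D_square lt_xk; lia.
rewrite !tnth_durfee_code; have lt_row : k.-1 - i < k by have := ltn_ord i; lia.
by have := le_rows _ lt_row; lia.
Qed.

End DurfeeCode.

Definition code_row_len (v : seq nat) k x := nth 0 v (k.-1 - x) + x.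

Section CodeRowLen.

Variables (k : nat) (v : k.-tuple nat).
Hypothesis v_sorted : sorted ltn v.

Lemma code_row_len_noninc x x' : x' <= x -> x < k -> code_row_len v k x <= code_row_len v k x'.
Proof.
move=> le_x'x lt_xk; have lt_sum : k.-1 - x + (x - x') < size v by rewrite size_tuple; lia.
have := sorted_ltn_nth_addn v_sorted lt_sum.
by rewrite /code_row_len (_ : k.-1 - x + (x - x') = k.-1 - x'); lia.
Qed.

Lemma code_row_len_ge x : all (leq 1) v -> x < k -> k <= code_row_len v k x.
Proof.
move=> v_pos lt_xk; have lt_i : k.-1 - x < size v by rewrite size_tuple; lia.
by have := sorted_ltn_nth_gt v_sorted v_pos lt_i; rewrite /code_row_len; lia.
Qed.

Lemma code_row_len_le n x : all (leq^~ n) v -> x < k -> code_row_len v k x <= n.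
Proof.
move=> v_le_n lt_xk; have lt_i : k.-1 - x < size v by rewrite size_tuple; lia.
by have := sorted_ltn_nth_room v_sorted v_le_n lt_i; rewrite size_tuple /code_row_len; lia.
Qed.

End CodeRowLen.

Definition durfee_diagram a b k (u v : seq nat) : {set 'I_a * 'I_b} :=
  [set q : 'I_a * 'I_b | (q.1 < k) && (q.2 < code_row_len v k q.1) ||
                        (q.2 < k) && (q.1 < code_row_len u k q.2)].

Section DurfeeDiagram.

Variables (a b k : nat) (u v : k.-tuple nat).

Lemma tr_durfee_diagram : tr_diagram (durfee_diagram a b k u v) = durfee_diagram b a k v u.
Proof. by apply/setP => q; rewrite !inE /= orbC. Qed.

Lemma ferrers_durfee_diagram :
  sorted ltn u -> sorted ltn v -> ferrers (durfee_diagram a b k u v).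
Proof.
move=> u_sorted v_sorted x x' y y'; rewrite !inE /=.
case/orP => /andP[lt_k lt_len] le_x le_y.
  apply/orP; left; rewrite (leq_ltn_trans le_x lt_k) /=.
  by have := code_row_len_noninc v_sorted le_x lt_k; lia.
apply/orP; right; rewrite (leq_ltn_trans le_y lt_k) /=.
by have := code_row_len_noninc u_sorted le_y lt_k; lia.
Qed.

Lemma durfee_length_durfee_diagram : k <= a -> k <= b ->
  sorted ltn v -> all (fun w => 1 <= w <= b) v ->
  durfee_length_is (durfee_diagram a b k u v) k.
Proof.
move=> le_ka le_kb v_sorted v_bounded.
have v_pos : all (leq 1) v by apply: sub_all v_bounded => w /andP[].
split=> [i j lt_ik lt_jk | m m_square].
  have [lt_ia lt_jb] : i < a /\ j < b by lia.
  exists (Ordinal lt_ia), (Ordinal lt_jb); do 2!split=> //; rewrite inE /= lt_ik /=.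
  by have := code_row_len_ge v_sorted v_pos lt_ik; lia.
rewrite leqNgt; apply/negP => lt_km.
have [x [y [val_x [val_y xy_D]]]] := m_square k k lt_km lt_km.
by move: xy_D; rewrite inE /= val_x val_y ltnn.
Qed.

Lemma row_len_durfee_diagram x : sorted ltn v -> all (fun w => 1 <= w <= b) v ->
  x < k -> x < a -> row_len (durfee_diagram a b k u v) x = code_row_len v k x.
Proof.
move=> v_sorted v_bounded lt_xk lt_xa.
have v_pos : all (leq 1) v by apply: sub_all v_bounded => w /andP[].
have v_le_b : all (leq^~ b) v by apply: sub_all v_bounded => w /andP[].
have ge_k := code_row_len_ge v_sorted v_pos lt_xk.
rewrite /row_len.
suff -> : row (durfee_diagram a b k u v) x = [set y : 'I_b | y < code_row_len v k x].
  exact: card_ord_ltn (code_row_len_le v_sorted v_le_b lt_xk).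
apply/setP => y; rewrite (in_row _ (Ordinal lt_xa)) !inE /= lt_xk /=.
by apply/orP/idP => [[// | /andP[lt_yk _]] | ]; [lia | left].
Qed.

Lemma durfee_code_diagram : k <= a -> sorted ltn v -> all (fun w => 1 <= w <= b) v ->
  durfee_code (durfee_diagram a b k u v) k = v.
Proof.
move=> le_ka v_sorted v_bounded; apply: eq_from_tnth => i; rewrite tnth_durfee_code.
have [lt_row lt_rowa] : k.-1 - i < k /\ k.-1 - i < a by have := ltn_ord i; lia.
rewrite row_len_durfee_diagram // /code_row_len subKn; last by have := ltn_ord i; lia.
by rewrite addnK (tnth_nth 0).
Qed.

End DurfeeDiagram.

Lemma poset_iso_of_cancel (S T : Type) (leS : S -> S -> Prop) (leT : T -> T -> Prop)
    (f : S -> T) (g : T -> S) :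
  (forall s1 s2, leS s1 s2 -> leS s2 s1 -> s1 = s2) -> (forall t, leT t t) -> cancel g f ->
  (forall s1 s2, leS s1 s2 <-> leT (f s1) (f s2)) -> poset_iso leS leT.
Proof.
move=> leS_anti leT_refl gK f_mono; exists f; split=> //; exists g => // s.
by apply: leS_anti; apply/f_mono; rewrite gK.
Qed.

Definition code_Ck a b k (D : {set 'I_a * 'I_b}) (D_ferrers : ferrers D)
    (D_square : square_in D k) : Ck b k :=
  exist _ (durfee_code D k)
    (conj (durfee_code_sorted D_ferrers D_square) (durfee_code_bounded D_ferrers D_square)).

Section Isomorphism.

Variables a b k : nat.
Implicit Types D E : Dk a b k.

Definition Dk_code (D : Dk a b k) : Ck a k * Ck b k :=
  let: exist E (conj E_ferrers E_durfee) := D in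
  (code_Ck (ferrers_tr_diagram E_ferrers) (square_in_tr_diagram (proj1 E_durfee)),
   code_Ck E_ferrers (proj1 E_durfee)).

Definition CC_diagram (le_ka : k <= a) (le_kb : k <= b) (p : Ck a k * Ck b k) : Dk a b k :=
  let: (exist u (conj u_sorted _), exist v (conj v_sorted v_bounded)) := p in
  exist _ (durfee_diagram a b k u v)
    (conj (ferrers_durfee_diagram u_sorted v_sorted)
          (durfee_length_durfee_diagram u le_ka le_kb v_sorted v_bounded)).

Lemma Dk_code_mono D E : Dk_le D E <-> CC_le (Dk_code D) (Dk_code E).
Proof.
case: D E => [D [D_ferrers [D_square D_max]]] [E [E_ferrers [E_square E_max]]].
rewrite /Dk_le /CC_le /Ck_le /= (subset_ferrers_row_len D_ferrers D_max E_ferrers).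
rewrite (leq_durfee_code D_ferrers D_square E_ferrers E_square).
rewrite (leq_durfee_code (ferrers_tr_diagram D_ferrers) (square_in_tr_diagram D_square)
                         (ferrers_tr_diagram E_ferrers) (square_in_tr_diagram E_square)).
exact: and_comm.
Qed.

Lemma CC_diagramK le_ka le_kb : cancel (CC_diagram le_ka le_kb) Dk_code.
Proof.
case=> [[u [u_sorted u_bounded]] [v [v_sorted v_bounded]]] /=.
congr pair; apply: subset_eq_compat; last exact: durfee_code_diagram.
by rewrite tr_durfee_diagram; apply: durfee_code_diagram.
Qed.

Lemma Dk_le_anti D E : Dk_le D E -> Dk_le E D -> D = E.
Proof.
case: D E => [D D_Dk] [E E_Dk]; rewrite /Dk_le /= => sDE sED.
by apply: subset_eq_compat; apply/eqP; rewrite eqEsubset sDE.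
Qed.

Lemma CC_le_refl (p : Ck a k * Ck b k) : CC_le p p.
Proof. by split. Qed.

End Isomorphism.

Theorem proposition1p12 (a b k : nat) :
  (k <= minn a b)%N ->
  poset_iso (@Dk_le a b k) (@CC_le a b k).
Proof.
rewrite leq_min => /andP[le_ka le_kb].
apply: (poset_iso_of_cancel (g := CC_diagram le_ka le_kb)).
- exact: Dk_le_anti.
- exact: CC_le_refl.
- exact: CC_diagramK.
- exact: Dk_code_mono.
Qed.
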